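(* Let $\boldsymbol{\tau}=(\tau_n\colon\mathcal{A}_{n+1}^+\to\mathcal{A}_n^+)_{n\in\mathbb{N}}$ be an everywhere growing and proper directive sequence. For $n\in\mathbb{N}$ let $\tilde{\mathcal{A}}_n=\mathcal{A}_n\cap\mathcal{L}(X^{(n)}_{\boldsymbol{\tau}})$ and let $\tilde\tau_n$ be the restriction of $\tau_n$ to $\tilde{\mathcal{A}}_{n+1}^+$. Then each $\tilde\tau_n$ takes values in $\tilde{\mathcal{A}}_n^+$, the directive sequence $\tilde{\boldsymbol{\tau}}=(\tilde\tau_n\colon\tilde{\mathcal{A}}_{n+1}^+\to\tilde{\mathcal{A}}_n^+)_{n\in\mathbb{N}}$ is letter-onto, and $X^{(n)}_{\tilde{\boldsymbol{\tau}}}=X^{(n)}_{\boldsymbol{\tau}}$ for every $n\in\mathbb{N}$. Conversely, if $\boldsymbol{\tau}$ is letter-onto, then $\mathcal{A}_n\subseteq\mathcal{L}(X^{(n)}_{\boldsymbol{\tau}})$ for every $n\in\mathbb{N}$.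
   Context: An alphabet is a finite set; $\mathcal{A}^+$ is the set of nonempty finite words. A morphism $\sigma\colon\mathcal{A}^+\to\mathcal{B}^+$ is a semigroup homomorphism; proper if there are letters $u,v$ such that every $\sigma(a)$ starts with $u$ and ends with $v$; letter-onto if every $b\in\mathcal{B}$ occurs in some $\sigma(a)$. For a directive sequence $\boldsymbol{\tau}=(\tau_n\colon\mathcal{A}_{n+1}^+\to\mathcal{A}_n^+)$, $\tau_{[n,N)}=\tau_n\circ\cdots\circ\tau_{N-1}$, the $n$th level is $X^{(n)}_{\boldsymbol{\tau}}=\{x\in\mathcal{A}_n^{\mathbb{Z}}:\forall\ell,\ x_{[-\ell,\ell]}$ occurs in $\tau_{[n,N)}(a)$ for some $N>n,a\in\mathcal{A}_N\}$. The sequence is everywhere growing if $\min_{a\in\mathcal{A}_N}|\tau_{[0,N)}(a)|\to\infty$, and proper / letter-onto if each $\tau_n$ is. The language $\mathcal{L}(X)$ of a subshift $X$ is the set of finite words occurring in some point of $X$ (so $\mathcal{A}_n\cap\mathcal{L}(X)$ is the set of letters occurring in points of $X$). *)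

From mathcomp Require Import all_boot all_algebra.
From mathcomp Require Import boolp.
Set Implicit Arguments. Unset Strict Implicit. Unset Printing Implicit Defensive.
Import GRing.Theory Num.Theory.

Section Directive.
Variable A : nat -> finType.
Variable tau : forall n, A n.+1 -> seq (A n).

Definition subst n (w : seq (A n.+1)) : seq (A n) := flatten (map (@tau n) w).

Fixpoint tau_range (n k : nat) : seq (A (k + n)) -> seq (A n) :=
  match k return seq (A (k + n)) -> seq (A n) with
  | 0 => fun w => w
  | k'.+1 => fun w => @tau_range n k' (@subst (k' + n) w)
  end.

Definition nonerasing := forall n (a : A n.+1), tau a != [::].

Definition proper_dir :=
  forall n, exists u v : A n, forall a : A n.+1,
    head u (tau a) = u /\ last v (tau a) = v /\ tau a != [::].

Definition letter_onto :=
  forall n (b : A n), exists a : A n.+1, b \in tau a.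

Definition everywhere_growing :=
  forall M : nat, exists N0 : nat, forall N, N0 <= N ->
    forall a : A (N + 0), M <= size (@tau_range 0 N [:: a]).

Definition window n (x : int -> A n) (l : nat) : seq (A n) :=
  [seq x (i%:Z - l%:Z)%R | i <- iota 0 (2 * l + 1)].

Definition inX n (x : int -> A n) : Prop :=
  forall l : nat, exists k : nat, exists a : A (k + n),
    0 < k /\ infix (window x l) (@tau_range n k [:: a]).

Definition inL n (b : A n) : Prop :=
  exists x : int -> A n, inX x /\ exists i : int, x i = b.

End Directive.

Definition Atil (A : nat -> finType) (tau : forall n, A n.+1 -> seq (A n))
  (n : nat) : finType :=
  {a : A n | `[< inL tau a >]}.

(* The letters of [X^(n)] are the letters that extend arbitrarily far on
   both sides inside images [tau_[n,N)(a)]; a König argument builds the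
   point. Extendability passes along [tau], so [tau] maps [~A_(n+1)] into
   [~A_n^+]. Conversely, an extendable word of level [n] sits, with long
   contexts, in the image of a word of level [n+1]; as there are finitely
   many letters, a single letter of level [n+1] works for all context
   lengths, is itself extendable, and gives letter-ontoness.
   To place [X^(n)] in the restricted level, choose [N] so that the images of
   the letters of level [N] are longer than a given window of [x]: the window
   lies in the image of an extendable pair [c d] of level [N]. Either [c d]
   lies in [tau e] for an extendable letter [e], or it straddles two images;
   then, by properness, it is the junction of any two consecutive images, and
   these occur in the image of any extendable letter of a high enough level.
   If [tau] is letter-onto, every letter lies in arbitrarily long images of
   letters, and properness with growth gives every letter a context on both
   sides, so every letter is extendable. *)

From mathcomp Require Import all_boot all_algebra.
From mathcomp Require Import boolp.
From mathcomp Require Import zify.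
Set Implicit Arguments. Unset Strict Implicit. Unset Printing Implicit Defensive.

Lemma antitone_exists_forall (T : finType) (Q : nat -> T -> Prop) :
  (forall m m' t, m <= m' -> Q m' t -> Q m t) ->
  (forall m, exists t, Q m t) -> exists t, forall m, Q m t.
Proof.
move=> anti ex; apply: contrapT => /forallNP none.
have [f hf] : {f : T -> nat & forall t, ~ Q (f t) t}.
  by apply: (@choice _ _ (fun t m => ~ Q m t)) => t; apply/existsNP; exact: none.
have [t ht] := ex (\max_t f t).
by apply: (hf t); apply: anti ht; apply: (leq_bigmax (F := f)).
Qed.

Section FlattenMap.
Variables (T U : Type) (g : T -> seq U).

Lemma size_flatten_map_le B s : (forall c, size (g c) <= B) ->
  size (flatten (map g s)) <= B * size s.
Proof.
by move=> gB; elim: s => //= c s IH; rewrite size_cat mulnS leq_add.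
Qed.

Lemma size_flatten_map_ge K s : (forall c, K <= size (g c)) ->
  K * size s <= size (flatten (map g s)).
Proof.
by move=> gK; elim: s => [|c s IH] /=; rewrite ?muln0 // size_cat mulnS leq_add.
Qed.

Lemma flatten_map_index s i : i < size (flatten (map g s)) ->
  exists p c q j, [/\ s = p ++ c :: q, j < size (g c)
                    & i = size (flatten (map g p)) + j].
Proof.
elim: s i => [|c s IH] i //=; rewrite size_cat => lt_i.
have [lt_ic|le_ci] := ltnP i (size (g c)); first by exists [::], c, s, i.
have [|p [c' [q [j [-> lt_j ei]]]]] := IH (i - size (g c)); first lia.
by exists (c :: p), c', q, j; split=> //=; rewrite size_cat; lia.
Qed.

(* Blocks have length at most [B], so the [B * m.+1] letters on either side
   of [w] span more than [m] blocks. *)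
Lemma flatten_map_locate B s l u w r t m :
  (forall c, 0 < size (g c) <= B) ->
  flatten (map g s) = l ++ u ++ w ++ r ++ t -> 0 < size w ->
  B * m.+1 <= size u -> B * m.+1 <= size r ->
  exists p c q j, [/\ s = p ++ c :: q, j < size (g c), m < size p, m < size q
                    & drop j (g c) ++ flatten (map g q) = w ++ r ++ t].
Proof.
move=> gB e w0 hu hr.
have gleB c : size (g c) <= B by case/andP: (gB c).
have [|p [c [q [j [es lt_j ei]]]]] := @flatten_map_index s (size l + size u).
  by rewrite e !size_cat; lia.
have ed : drop j (g c) ++ flatten (map g q) = w ++ r ++ t.
  have := congr1 (drop (size l + size u)) e.
  rewrite catA drop_size_cat ?size_cat // es map_cat flatten_cat /= ei.
  by rewrite addnC -drop_drop drop_size_cat // => <-; rewrite drop_cat lt_j.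
exists p, c, q, j; split=> //.
  have := size_flatten_map_le p gleB; have := gleB c; rewrite mulnS in hu; nia.
have := size_flatten_map_le q gleB; have := gleB c.
move/(congr1 size): ed; rewrite !size_cat size_drop mulnS in hr *; nia.
Qed.

End FlattenMap.

Lemma infix_map_inj (T U : eqType) (f : T -> U) (s t : seq T) : injective f ->
  infix (map f s) (map f t) = infix s t.
Proof.
move=> inj_f; apply/idP/idP => /infixP [p [q e]]; apply/infixP; last first.
  by exists (map f p), (map f q); rewrite e !map_cat.
exists (take (size p) t), (drop (size s) (drop (size p) t)).
suff es : s = take (size s) (drop (size p) t).
  by rewrite [X in _ ++ X ++ _]es !cat_take_drop.
apply: (inj_map inj_f); rewrite map_take map_drop e drop_size_cat ?size_map //.
by rewrite take_size_cat ?size_map.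
Qed.

Section FlattenMapEq.
Variables (T U : eqType) (g : T -> seq U).

Lemma infix_flatten_map (s t : seq T) : infix s t ->
  infix (flatten (map g s)) (flatten (map g t)).
Proof.
move=> /infixP [p [q ->]]; apply/infixP.
by exists (flatten (map g p)), (flatten (map g q)); rewrite !map_cat !flatten_cat.
Qed.

Lemma flatten_map_locate_letter B s l u (b : U) r t m :
  (forall c, 0 < size (g c) <= B) ->
  flatten (map g s) = l ++ u ++ b :: r ++ t ->
  B * m.+1 <= size u -> B * m.+1 <= size r ->
  exists p c q, [/\ s = p ++ c :: q, b \in g c, m < size p & m < size q].
Proof.
move=> gB e hu hr.
have [p [c [q [j [-> lt_j hp hq ed]]]]] :=
  @flatten_map_locate _ _ g B s l u [:: b] r t m gB e erefl hu hr.
exists p, c, q; split=> //; apply: (@mem_drop j).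
case E: (drop j (g c)) ed => [|b' d] /=; last by case=> ->; rewrite mem_head.
by move/(congr1 size): E; rewrite size_drop /=; lia.
Qed.

Lemma flatten_map_locate_short B s l u w r t m :
  (forall c, 0 < size (g c) <= B) -> (forall c, size w <= size (g c)) ->
  flatten (map g s) = l ++ u ++ w ++ r ++ t -> 0 < size w ->
  B * m.+1 <= size u -> B * m.+1 <= size r ->
  exists p c d q, [/\ s = p ++ c :: d :: q, infix w (g c ++ g d),
                      m <= size p & m <= size q].
Proof.
move=> gB gw e w0 hu hr.
have [p [c [[|d q] [j [-> lt_j hp hq ed]]]]] :=
  flatten_map_locate gB e w0 hu hr; first by [].
exists p, c, d, q; split=> //; last exact: ltnW.
have pre : prefix w (drop j (g c) ++ g d).
  have le_w : size w <= size (drop j (g c) ++ g d).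
    by rewrite size_cat (leq_trans (gw d)) ?leq_addl.
  rewrite prefixE; move/(congr1 (take (size w))): ed.
  by rewrite /= catA takel_cat // [X in _ = X]take_size_cat // => ->.
apply: infix_trans (prefixW pre) _.
by rewrite -{2}(cat_take_drop j (g c)) -catA; apply: suffix_infix.
Qed.

Lemma flatten_map_locate_pair B s l u (x y : U) r t m :
  (forall c, 0 < size (g c) <= B) ->
  flatten (map g s) = l ++ u ++ [:: x; y] ++ r ++ t ->
  B * m.+1 <= size u -> B * m.+1 <= size r ->
  exists p c q, [/\ s = p ++ c :: q, m < size p, m < size q &
    infix [:: x; y] (g c) \/
    exists d q', [/\ q = d :: q', x = last x (g c) & y = head y (g d)]].
Proof.
move=> gB e hu hr.
have [p [c [q [j [-> lt_j hp hq ed]]]]] := flatten_map_locate gB e erefl hu hr.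
exists p, c, q; split=> //.
case E: (drop j (g c)) ed => [|x' [|y' z]] /=.
- by move/(congr1 size): E; rewrite size_drop /=; lia.
- case=> <- eq; right; case: q hq eq => [|d q'] //= _ eq.
  exists d, q'; split=> //; first by rewrite -(cat_take_drop j (g c)) E last_cat.
  have /andP [gd0 _] := gB d.
  by case: (g d) gd0 eq => [|y'' z'] //= _ [->].
- case=> <- <- _; left; have := infix_drop (g c) j.
  by rewrite E; apply: infix_trans; apply: (prefix_infix [:: x'; y'] z).
Qed.
End FlattenMapEq.

Section Windows.
Variable A : nat -> finType.

Lemma windowS n (x : int -> A n) l :
  window x l.+1 = x (- l.+1%:Z)%R :: rcons (window x l) (x l.+1%:Z%R).
Proof.
rewrite /window; set k := 2 * l + 1.
rewrite (_ : 2 * l.+1 + 1 = 1 + k + 1); last by rewrite /k; lia.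
have shift : iota 1 k = map (addn 1) (iota 0 k) by rewrite -iotaDl.
rewrite iotaD (iotaD 0 1) map_cat cats1 /= shift -map_comp.
congr (_ :: rcons _ _); first by congr x; lia.
  by apply: eq_map => i /=; congr x; lia.
by congr x; rewrite /k; lia.
Qed.

Lemma window_extend n (x : int -> A n) l m : exists u v,
  [/\ window x (m + l) = u ++ window x l ++ v, size u = m & size v = m].
Proof.
elim: m => [|m [u [v [e su sv]]]]; first by exists [::], [::]; rewrite cats0.
exists (x (- (m + l).+1%:Z)%R :: u), (rcons v (x (m + l).+1%:Z%R)).
by rewrite addSn windowS e -!rcons_cat /= size_rcons su sv.
Qed.

Lemma mem_window n (x : int -> A n) i : exists l, x i \in window x l.
Proof.
case: i => [[|k]|k]; first by exists 0; rewrite mem_seq1.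
  by exists k.+1; rewrite windowS inE mem_rcons mem_head orbT.
by exists k.+1; rewrite windowS NegzE mem_head.
Qed.

Lemma window_map (B : nat -> finType) n (f : A n -> B n) (x : int -> A n) l :
  window (fun i => f (x i)) l = map f (window x l).
Proof. by rewrite /window -map_comp. Qed.
End Windows.

Section Derivation.
Variables (A : nat -> finType) (tau : forall n, A n.+1 -> seq (A n)).

(* [derives w v] says [v = tau_[n, N) w] for [w] over [A N] and [v] over
   [A n]; a relation avoids casts between [A (k + n)] and [A N]. *)
Inductive derives (N : nat) (w : seq (A N)) : forall n, seq (A n) -> Prop :=
  | derives_refl : derives w w
  | derives_subst n (v : seq (A n.+1)) : derives w v -> derives w (subst tau v).

Lemma derives_le N (w : seq (A N)) n (v : seq (A n)) : derives w v -> n <= N.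
Proof. by elim=> // m u _ /ltnW. Qed.

Lemma derives_substl N (w : seq (A N.+1)) n (v : seq (A n)) :
  derives (subst tau w) v -> derives w v.
Proof.
by elim=> [|m u _]; [apply: derives_subst (derives_refl _) | apply: derives_subst].
Qed.

Lemma derives_cast N (w : seq (A N)) n (v : seq (A n)) :
  derives w v -> forall e : n = N, ecast i (seq (A i)) e v = w.
Proof.
case=> [|m u /derives_le lt_mN] e; first by rewrite (eq_irrelevance e erefl).
by exfalso; move: lt_mN; rewrite e ltnn.
Qed.

Lemma derives_pred N (w : seq (A N)) n (v : seq (A n)) : derives w v -> n < N ->
  exists2 v', derives w v' & v = subst tau v'.
Proof. by case=> [|m u H]; [rewrite ltnn | exists u]. Qed.

Lemma derives_fun N (w : seq (A N)) n (v v' : seq (A n)) :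
  derives w v -> derives w v' -> v = v'.
Proof.
move=> H; elim: H v' => [|m u H IH] v' H'; first exact: esym (derives_cast H' erefl).
by have [u' /IH -> ->] := derives_pred H' (derives_le H).
Qed.

Lemma derives_trans N (w : seq (A N)) M (V : seq (A M)) n (v : seq (A n)) :
  derives w V -> derives V v -> derives w v.
Proof. by move=> H1; elim=> // m u _; apply: derives_subst. Qed.

Lemma derives_exists N (w : seq (A N)) n : n <= N -> exists v : seq (A n), derives w v.
Proof.
move=> le; move: w; rewrite -(subnK le); elim: (N - n) => [|k IH] w.
  by exists w; constructor.
by have [v hv] := IH (subst tau w : seq (A (k + n))); exists v; apply: derives_substl.
Qed.

Lemma derives_split N (w : seq (A N)) n (v : seq (A n)) M :
  derives w v -> n <= M <= N -> exists2 V : seq (A M), derives w V & derives V v.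
Proof.
elim=> [|m u H IH] /andP [le_nM le_MN].
  have eMN : M = N by apply/eqP; rewrite eqn_leq le_MN le_nM.
  by subst M; exists w; constructor.
have [lt_mM|lt_Mm|<-] := ltngtP m M.
- have [|V hV hu] := IH; first by rewrite lt_mM.
  by exists V => //; apply: derives_subst.
- by move: le_nM; rewrite leqNgt lt_Mm.
- by exists (subst tau u); [apply: derives_subst | constructor].
Qed.

Lemma subst_cat n (w1 w2 : seq (A n.+1)) :
  subst tau (w1 ++ w2) = subst tau w1 ++ subst tau w2.
Proof. by rewrite /subst map_cat flatten_cat. Qed.

Lemma derives_cat N (w1 w2 : seq (A N)) n (v1 v2 : seq (A n)) :
  derives w1 v1 -> derives w2 v2 -> derives (w1 ++ w2) (v1 ++ v2).
Proof.
move=> H1; elim: H1 v2 => [|m u1 H1 IH] v2 H2.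
  by rewrite -(derives_fun (derives_refl w2) H2); constructor.
have [u2 /IH H ->] := derives_pred H2 (derives_le H1).
by rewrite -subst_cat; apply: derives_subst.
Qed.

Lemma derives_nil N n (v : seq (A n)) : derives ([::] : seq (A N)) v -> v = [::].
Proof. by elim=> // m u _ ->. Qed.

Lemma derives_flatten_map N n (g : A N -> seq (A n)) :
  (forall c, derives [:: c] (g c)) ->
  forall W V, derives W V -> V = flatten (map g W).
Proof.
move=> hg; elim=> [|c W IH] V hV; first exact: derives_nil hV.
have [V' hV'] := derives_exists W (derives_le hV).
by rewrite /= (derives_fun hV (derives_cat (hg c) hV')) (IH _ hV').
Qed.

Lemma derives_letterwise N n : n <= N ->
  exists g : A N -> seq (A n), forall c, derives [:: c] (g c).
Proof.
move=> le_nN; have [g hg] := choice (fun c => derives_exists [:: c] le_nN).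
by exists g.
Qed.

Lemma derives_tau_range n k (w : seq (A (k + n))) : derives w (tau_range tau w).
Proof.
elim: k w => [|k IH] w /=; first by constructor.
by apply: derives_substl; apply: IH.
Qed.

Lemma derives_tau n (c : A n.+1) : derives [:: c] (tau c).
Proof. by have := derives_subst (derives_refl [:: c]); rewrite /subst /= cats0. Qed.
End Derivation.

Section Language.
Variables (A : nat -> finType) (tau : forall n, A n.+1 -> seq (A n)).

Definition lang n (w : seq (A n)) :=
  exists N (a : A N) (V : seq (A n)), [/\ n < N, derives tau [:: a] V & infix w V].

Lemma lang_infix n (w w' : seq (A n)) : infix w' w -> lang w -> lang w'.
Proof.
move=> ww' [N [a [V [lt_nN hV hw]]]].
by exists N, a, V; split=> //; apply: infix_trans hw.
Qed.

Lemma inX_lang n (x : int -> A n) : inX tau x <-> forall l, lang (window x l).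
Proof.
split=> hx l.
  have [k [a [k0 hw]]] := hx l; exists (k + n), a, (tau_range tau [:: a]).
  by split=> //; [lia | apply: derives_tau_range].
have [N [a [V [lt_nN hV hw]]]] := hx l.
move: a hV; rewrite -(subnK (ltnW lt_nN)) => a hV.
exists (N - n), a; split; first lia.
by rewrite -(derives_fun hV (derives_tau_range _ _)).
Qed.

Lemma lang_flatten_map N n (g : A N -> seq (A n)) (W : seq (A N)) : n <= N ->
  (forall c, derives tau [:: c] (g c)) -> lang W -> lang (flatten (map g W)).
Proof.
move=> le_nN hg [M [a [V [lt_NM hV hW]]]]; have [V' hV'] := derives_exists tau V le_nN.
exists M, a, V'; split; [lia | exact: derives_trans hV hV' |].
by rewrite (derives_flatten_map hg hV'); apply: infix_flatten_map.
Qed.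

Definition extendable n m (w : seq (A n)) :=
  exists u v, [/\ lang (u ++ w ++ v), m <= size u & m <= size v].

Lemma extendable_infix n m (w w' : seq (A n)) :
  infix w' w -> extendable m w -> extendable m w'.
Proof.
move=> /infixP [p [q ->]] [u [v [hL su sv]]]; exists (u ++ p), (q ++ v).
by rewrite !size_cat; split; [move: hL; rewrite -!catA | lia | lia].
Qed.

Lemma extendable_flatten_map N n (g : A N -> seq (A n)) K m (W : seq (A N)) :
  n <= N -> (forall c, derives tau [:: c] (g c)) -> (forall c, K <= size (g c)) ->
  extendable m W -> extendable (K * m) (flatten (map g W)).
Proof.
move=> le_nN hg gK [u [v [hL su sv]]].
exists (flatten (map g u)), (flatten (map g v)); split.
- by have := lang_flatten_map le_nN hg hL; rewrite !map_cat !flatten_cat.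
- by apply: leq_trans (size_flatten_map_ge _ gK); rewrite leq_mul2l su orbT.
- by apply: leq_trans (size_flatten_map_ge _ gK); rewrite leq_mul2l sv orbT.
Qed.

Lemma extendable_le n m m' (w : seq (A n)) :
  m <= m' -> extendable m' w -> extendable m w.
Proof.
by move=> le_mm' [u [v [hL su sv]]]; exists u, v; split=> //; apply: leq_trans le_mm' _.
Qed.

Lemma extendable_grow n (w : seq (A n)) : (forall m, extendable m w) ->
  exists c d, forall m, extendable m (c :: rcons w d).
Proof.
move=> ext; suff [[c d] ext'] : exists cd : A n * A n,
    forall m, extendable m (cd.1 :: rcons w cd.2) by exists c, d.
apply: antitone_exists_forall => [m m' cd|m]; first exact: extendable_le.
have [u [v [hL su sv]]] := ext m.+1.
case/lastP: u hL su => [|u c] // hL; case: v hL sv => [|d v] // hL.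
rewrite size_rcons => sv su; exists (c, d), u, v; split=> //.
by move: hL; rewrite /= -!cats1 /= -!catA.
Qed.

Section Konig.
Variables (n : nat) (b : A n).
Hypothesis ext_b : forall m, extendable m [:: b].

Let good (pq : seq (A n) * seq (A n)) :=
  `[< forall m, extendable m (pq.1 ++ b :: pq.2) >].

Let widen pq :=
  if [pick cd : A n * A n | good (cd.1 :: pq.1, rcons pq.2 cd.2)] is Some cd
  then (cd.1 :: pq.1, rcons pq.2 cd.2) else pq.

Let context l := iter l widen ([::], [::]).

Lemma widen_good pq : good pq ->
  good (widen pq) /\ exists c d, widen pq = (c :: pq.1, rcons pq.2 d).
Proof.
move=> /asboolP gpq; rewrite /widen; case: pickP => [[c d] gcd|none].
  by split=> //; exists c, d.
have [c [d]] := extendable_grow gpq; rewrite rcons_cat => gcd.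
by move: (none (c, d)); rewrite /good asboolT.
Qed.

Lemma context_good l : good (context l).
Proof. by elim: l => [|l /widen_good []//]; apply/asboolP. Qed.

Let point (i : int) : A n :=
  match i with
  | Posz j => last b (context j).2
  | Negz j => head b (context j.+1).1
  end.

Lemma window_point l : window point l = (context l).1 ++ b :: (context l).2.
Proof.
elim: l => [|l IH]; first by rewrite /window.
have [_ [c [d e]]] := widen_good (context_good l).
rewrite windowS -NegzE IH /point /= /context /= -/(context l) e /=.
by rewrite rcons_cat last_rcons.
Qed.

Lemma extendable_inL : inL tau b.
Proof.
exists point; split; last by exists 0%R.
apply/inX_lang => l; have /asboolP /(_ 0) [u [v [hL _ _]]] := context_good l.
by apply: lang_infix hL; rewrite window_point; apply: infix_infix.
Qed.
End Konig.

Lemma inX_extendable n (x : int -> A n) l m : inX tau x -> extendable m (window x l).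
Proof.
move=> /inX_lang hx; have [u [v [e su sv]]] := window_extend x l m.
by exists u, v; rewrite -e su sv; split.
Qed.

Lemma inL_extendableP n (b : A n) : inL tau b <-> forall m, extendable m [:: b].
Proof.
split=> [[x [hx [i <-]]] m|]; last exact: extendable_inL.
have [l hl] := mem_window x i; have := inX_extendable l m hx.
case/splitPr: hl => p q [u [v [hL su sv]]]; exists (u ++ p), (q ++ v).
by rewrite !size_cat; split; [move: hL; rewrite -!catA | lia | lia].
Qed.
End Language.

Section Desubstitution.
Variables (A : nat -> finType) (tau : forall n, A n.+1 -> seq (A n)).

Definition tau_max n := \max_(c : A n.+1) size (tau c).

Lemma size_tau_le n (c : A n.+1) : size (tau c) <= tau_max n.
Proof. exact: (leq_bigmax (F := fun c => size (tau c))). Qed.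

Definition derive_bound n N := \prod_(n <= i < N) tau_max i.

Lemma derives_size_le N (W : seq (A N)) n (V : seq (A n)) :
  derives tau W V -> size V <= derive_bound n N * size W.
Proof.
elim=> [|m v H IH]; first by rewrite /derive_bound big_geq ?mul1n.
rewrite /derive_bound big_ltn ?(derives_le H) // -mulnA.
apply: leq_trans (size_flatten_map_le _ (@size_tau_le m)) _.
by rewrite leq_mul2l IH orbT.
Qed.

Definition derive_cap n N := \max_(i < N.+1) derive_bound n i.

(* [derive_cap n N] bounds the images of single letters from the levels
   [n..N], so a longer word of the language is witnessed above level [N]. *)
Lemma lang_desubst n N (w : seq (A n)) : n <= N -> derive_cap n N < size w ->
  lang tau w -> exists2 V : seq (A N), lang tau V &
    exists2 V', derives tau V V' & infix w V'.
Proof.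
move=> le_nN big [M [a [V [lt_nM hV hw]]]].
have lt_NM : N < M.
  rewrite ltnNge; apply/negP => le_MN; move: big; rewrite ltnNge => /negP; apply.
  apply: leq_trans (size_infix hw) _; apply: leq_trans (derives_size_le hV) _.
  have M_le := leq_bigmax (F := fun i : 'I_N.+1 => derive_bound n i)
                         (Ordinal (le_MN : M < N.+1)).
  by rewrite muln1.
have [|V1 hV1 hV1V] := derives_split (M := N) hV; first by rewrite le_nN ltnW.
by exists V1; [exists M, a, V1; split=> //; apply: infix_refl | exists V].
Qed.

Hypothesis ne : nonerasing tau.

Lemma size_tau_gt0 n (c : A n.+1) : 0 < size (tau c).
Proof. by rewrite lt0n size_eq0 ne. Qed.

Lemma inL_tau n (a : A n.+1) b : inL tau a -> b \in tau a -> inL tau b.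
Proof.
move=> /inL_extendableP ext_a hb; apply/inL_extendableP => m.
apply: (@extendable_infix _ _ _ _ (tau a)); first by rewrite infix1s.
have := extendable_flatten_map (leqnSn n) (@derives_tau _ tau n) (@size_tau_gt0 n)
  (ext_a m).
by rewrite mul1n /= cats0.
Qed.

Lemma inL_preimage n (b : A n) :
  inL tau b -> exists2 a : A n.+1, inL tau a & b \in tau a.
Proof.
move=> /inL_extendableP ext_b.
suff [a ha] : exists a : A n.+1, forall m, b \in tau a /\ extendable tau m [:: a].
  by exists a; [apply/inL_extendableP => m; case: (ha m) | case: (ha 0)].
apply: antitone_exists_forall => [m m' a le_mm' [hb ha]|m].
  by split=> //; apply: extendable_le ha.
have tauB (c : A n.+1) : 0 < size (tau c) <= tau_max n.
  by rewrite size_tau_gt0 size_tau_le.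
have [u [v [hL su sv]]] := ext_b (tau_max n * m.+1 + derive_cap n n.+1).
have [|V hV [V' hV' /infixP [l [t e]]]] := lang_desubst (leqnSn n) _ hL.
  by rewrite !size_cat /=; lia.
rewrite (derives_flatten_map (@derives_tau _ tau n) hV') -!catA /= in e.
have [||p [c [q [eV hb hp hq]]]] := flatten_map_locate_letter (m := m) tauB e.
- exact: leq_trans (leq_addr _ _) su.
- exact: leq_trans (leq_addr _ _) sv.
exists c; split=> //; exists p, q.
by split; [move: hV; rewrite eV | exact: ltnW | exact: ltnW].
Qed.

Lemma inL_exists_above n (b : A n) N : inL tau b -> n <= N -> exists a : A N, inL tau a.
Proof.
move=> hb /subnK <-; elim: (N - n) => [|k [a /inL_preimage [a' ha' _]]].
  by exists b.
by exists a'.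
Qed.
End Desubstitution.

Section Covering.
Variables (A : nat -> finType) (tau : forall n, A n.+1 -> seq (A n)).

(* The language of the restriction of [tau] to the alphabets [~A_N],
   read over [A]. *)
Definition covered n (w : seq (A n)) := exists N (a : A N) (V : seq (A n)),
  [/\ n < N, inL tau a, derives tau [:: a] V & infix w V].

Lemma covered_infix n (w w' : seq (A n)) : infix w' w -> covered w -> covered w'.
Proof.
move=> ww' [N [a [V [lt_nN ha hV hw]]]].
by exists N, a, V; split=> //; apply: infix_trans hw.
Qed.

Lemma covered_flatten_map N n (g : A N -> seq (A n)) (W : seq (A N)) : n <= N ->
  (forall c, derives tau [:: c] (g c)) -> covered W -> covered (flatten (map g W)).
Proof.
move=> le_nN hg [M [a [V [lt_NM ha hV hW]]]].
have [V' hV'] := derives_exists tau V le_nN.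
exists M, a, V'; split; [lia | done | exact: derives_trans hV hV' |].
by rewrite (derives_flatten_map hg hV'); apply: infix_flatten_map.
Qed.

Hypotheses (ne : nonerasing tau) (eg : everywhere_growing tau) (pr : proper_dir tau).

Lemma proper_ends N : exists u v : A N,
  forall e : A N.+1, (exists s, tau e = u :: s) /\ (exists s, tau e = rcons s v).
Proof.
have [u [v hpr]] := pr N; exists u, v => e.
have [hu [hv ne_e]] := hpr e; split.
  by case: (tau e) hu ne_e => [|z s] //= -> _; exists s.
by case/lastP: (tau e) hv ne_e => [|s z] //; rewrite last_rcons => -> _; exists s.
Qed.

Lemma growing_level j K : exists2 N, j < N &
  forall (c : A N) (V : seq (A j)), derives tau [:: c] V -> K <= size V.
Proof.
have [N0 hN0] := eg (derive_bound tau 0 j * K + 1).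
exists (maxn N0 j.+1 + 0); first by rewrite addn0 leq_max ltnSn orbT.
move=> c V hV; have [V0 hV0] := derives_exists tau V (leq0n j).
have := hN0 _ (leq_maxl N0 j.+1) c.
rewrite -(derives_fun (derives_trans hV hV0) (derives_tau_range _ _)).
move=> big; have small := derives_size_le hV0.
have : derive_bound tau 0 j * K < derive_bound tau 0 j * size V by lia.
by rewrite ltn_mul2l => /andP [_ /ltnW].
Qed.

Lemma window_in_extendable_pair n (x : int -> A n) l N (g : A N -> seq (A n)) :
  inX tau x -> n <= N -> (forall c, derives tau [:: c] (g c)) ->
  (forall c, size (window x l) <= size (g c)) ->
  exists c d, infix (window x l) (g c ++ g d) /\ forall m, extendable tau m [:: c; d].
Proof.
move=> hx le_nN hg gW.
have W0 : 0 < size (window x l) by rewrite size_map size_iota addn1.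
set B := \max_(c : A N) size (g c).
have gB c : 0 < size (g c) <= B.
  by rewrite (leq_trans W0 (gW c)) (leq_bigmax (F := fun c => size (g c))).
suff [[c d] hcd] : exists cd : A N * A N,
    forall m, infix (window x l) (g cd.1 ++ g cd.2) /\ extendable tau m [:: cd.1; cd.2].
  by exists c, d; split=> [|m]; [case: (hcd 0) | case: (hcd m)].
apply: antitone_exists_forall => [m m' cd le_mm' [hW hE]|m].
  by split=> //; apply: extendable_le hE.
have [u [v [hL su sv]]] := inX_extendable l (B * m.+1 + derive_cap tau n N) hx.
have [|V hV [V' hV' /infixP [s [t e]]]] := lang_desubst le_nN _ hL.
  by rewrite !size_cat; lia.
rewrite (derives_flatten_map hg hV') -!catA in e.
have [||p [c [d [q [eV hw hp hq]]]]] := flatten_map_locate_short (m := m) gB gW e W0.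
- exact: leq_trans (leq_addr _ _) su.
- exact: leq_trans (leq_addr _ _) sv.
by exists (c, d); split=> //; exists p, q; split=> //; move: hV; rewrite eV.
Qed.

Lemma proper_junction N : exists u v : A N,
  forall e1 e2 : A N.+1, [/\ forall x, head x (tau e2) = u,
                          forall x, last x (tau e1) = v
                          & infix [:: v; u] (tau e1 ++ tau e2)].
Proof.
have [u [v ends]] := proper_ends N; exists u, v => e1 e2.
have [[s2 ->] _] := ends e2; have [_ [s1 ->]] := ends e1.
split=> // [x|]; first by rewrite last_rcons.
by rewrite -cats1 -catA; apply: infix_infix.
Qed.

Lemma extendable_pair_dichotomy N (c d : A N) :
  (forall m, extendable tau m [:: c; d]) ->
  (exists2 e : A N.+1, inL tau e & infix [:: c; d] (tau e)) \/
  (forall e1 e2 : A N.+1, infix [:: c; d] (tau e1 ++ tau e2)).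
Proof.
move=> ext; have [u [v junction]] := proper_junction N.
have [[-> ->]|not_junction] := pselect (c = v /\ d = u).
  by right=> e1 e2; case: (junction e1 e2).
left; suff [e he] : exists e : A N.+1,
    forall m, infix [:: c; d] (tau e) /\ extendable tau m [:: e].
  by exists e; [apply/inL_extendableP => m; case: (he m) | case: (he 0)].
apply: antitone_exists_forall => [m m' e le_mm' [hcd hE]|m].
  by split=> //; apply: extendable_le hE.
have tauB (e : A N.+1) : 0 < size (tau e) <= tau_max tau N.
  by rewrite size_tau_gt0 ?size_tau_le.
have [u' [v' [hL su sv]]] := ext (tau_max tau N * m.+1 + derive_cap tau N N.+1).
have [|V hV [V' hV' /infixP [s [t e]]]] := lang_desubst (leqnSn N) _ hL.
  by rewrite !size_cat /=; lia.
rewrite (derives_flatten_map (@derives_tau _ tau N) hV') -!catA in e.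
have [||p [e1 [q [eV hp hq [hcd|[e2 [q' [_ hc hd]]]]]]]] :=
  flatten_map_locate_pair (m := m) tauB e.
- exact: leq_trans (leq_addr _ _) su.
- exact: leq_trans (leq_addr _ _) sv.
- exists e1; split=> //; exists p, q.
  by split; [move: hV; rewrite eV | exact: ltnW | exact: ltnW].
- by case: not_junction; have [hu hv _] := junction e1 e2; rewrite hc hv hd hu.
Qed.

Lemma covered_junction n (b : A n) N (w : seq (A N)) : inL tau b -> n <= N.+1 ->
  (forall e1 e2 : A N.+1, infix w (tau e1 ++ tau e2)) -> covered w.
Proof.
move=> hb le_n hw; have [M lt_M long] := growing_level N.+1 2.
have [f hf] := inL_exists_above ne hb (leq_trans le_n (ltnW lt_M)).
have [V hV] := derives_exists tau [:: f] (ltnW lt_M).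
case: V hV (long f _ hV) => [|e1 [|e2 V]] // hV _.
exists M, f, (subst tau [:: e1, e2 & V]); split; [lia | done | exact: derives_subst |].
by rewrite /subst /= catA; apply: infix_trans (hw e1 e2) (prefix_infix _ _).
Qed.

Lemma inX_covered n (x : int -> A n) l : inX tau x -> covered (window x l).
Proof.
move=> hx; have [N lt_nN long] := growing_level n (size (window x l)).
have [g hg] := derives_letterwise tau (ltnW lt_nN).
have [c [d [hw ext]]] :=
  window_in_extendable_pair hx (ltnW lt_nN) hg (fun c => long c _ (hg c)).
have cd_covered : covered [:: c; d].
  case: (extendable_pair_dichotomy ext) => [[e he hcd]|junction].
    by exists N.+1, e, (tau e); split=> //; apply: derives_tau.
  apply: (covered_junction (b := x 0)) junction; last lia.
  by exists x; split=> //; exists 0%R.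
apply: covered_infix (covered_flatten_map (ltnW lt_nN) hg cd_covered).
by rewrite /= cats0.
Qed.
End Covering.

Section LetterOnto.
Variables (A : nat -> finType) (tau : forall n, A n.+1 -> seq (A n)).
Hypotheses (ne : nonerasing tau) (eg : everywhere_growing tau) (pr : proper_dir tau).
Hypothesis lo : letter_onto tau.

Lemma letter_onto_derives n (a : A n) N : n <= N ->
  exists (c : A N) (V : seq (A n)), derives tau [:: c] V /\ a \in V.
Proof.
move=> /subnK <-; elim: (N - n) => [|k [c [V [hV ha]]]].
  by exists a, [:: a]; split; [constructor | rewrite mem_head].
have [c' hc'] := lo c; have [g hg] := derives_letterwise tau (leq_addl k n).
have [V' hV'] := derives_exists tau (tau c') (leq_addl k n).
exists c', V'; split; first exact: derives_trans (derives_tau tau c') hV'.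
rewrite (derives_flatten_map hg hV'); rewrite (derives_flatten_map hg hV) in ha.
by apply: mem_infix ha; apply: infix_flatten_map; rewrite infix1s.
Qed.

Lemma lang_tau_triple N (c : A N) :
  exists e1 e2 e3 : A N.+1, lang tau (tau e1 ++ tau e2 ++ tau e3).
Proof.
have [M lt_M long] := growing_level eg N.+1 3.
have [f _] := letter_onto_derives c (ltnW (ltnW lt_M)).
have [V hV] := derives_exists tau [:: f] (ltnW lt_M).
case: V hV (long f _ hV) => [|e1 [|e2 [|e3 V]]] // hV _.
exists e1, e2, e3, M, f, (subst tau [:: e1, e2, e3 & V]).
by split; [lia | apply: derives_subst | rewrite /subst /= !catA; apply: prefix_infix].
Qed.

(* Under a proper morphism the only letters of [tau c'] that may lack a
   neighbour inside [tau c'] are the common first and last letters, and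
   these have neighbours on both sides in [tau e1 ++ tau e2 ++ tau e3]. *)
Lemma letter_onto_context N (c : A N) :
  exists p q, [/\ p != [::], q != [::] & lang tau (p ++ c :: q)].
Proof.
have [u [v ends]] := proper_ends pr N.
have [e1 [e2 [e3 L3]]] := lang_tau_triple c.
have [c' hc'] := lo c.
have [s [t e]] : exists s t, tau c' = s ++ c :: t.
  by case/splitPr: hc' => s t; exists s, t.
case: s e => [|s0 s] e.
  have [[s' ec'] _] := ends c'; move: e; rewrite ec' => -[<- _].
  have [[s2 e2u] _] := ends e2; exists (tau e1), (s2 ++ tau e3); split.
  - exact: ne.
  - by rewrite -size_eq0 size_cat addn_eq0 !size_eq0 (negbTE (ne e3)) andbF.
  - by move: L3; rewrite e2u.
case/lastP: t e => [|t t0] e.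
  have [_ [s' ec']] := ends c'.
  have ecv : c = v by move: (congr1 (last c) e); rewrite ec' cats1 !last_rcons.
  have [_ [s2 e2v]] := ends e2; exists (tau e1 ++ s2), (tau e3); split.
  - by rewrite -size_eq0 size_cat addn_eq0 !size_eq0 (negbTE (ne e1)).
  - exact: ne.
  - by rewrite ecv -catA; move: L3; rewrite e2v -cats1 -!catA.
exists (s0 :: s), (rcons t t0); split; first by [].
  by rewrite -size_eq0 size_rcons.
rewrite -e; exists N.+1, c', (tau c').
by split; [| apply: derives_tau | apply: infix_refl].
Qed.

Lemma letter_onto_inL n (a : A n) : inL tau a.
Proof.
apply/inL_extendableP => m.
have [N lt_nN long] := growing_level eg n m.
have [g hg] := derives_letterwise tau (ltnW lt_nN).
have [c [V [hV ha]]] := letter_onto_derives a (ltnW lt_nN).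
rewrite (derives_flatten_map hg hV) /= cats0 in ha.
have [p [q [p0 q0 hL]]] := letter_onto_context c.
have ext_c : extendable tau 1 [:: c] by exists p, q; rewrite !lt0n !size_eq0.
have := extendable_flatten_map (ltnW lt_nN) hg (fun c => long c _ (hg c)) ext_c.
by rewrite muln1 /= cats0; apply: extendable_infix; rewrite infix1s.
Qed.
End LetterOnto.

Lemma tau_range_map (A B : nat -> finType) (tau : forall n, A n.+1 -> seq (A n))
    (sigma : forall n, B n.+1 -> seq (B n)) (f : forall n, B n -> A n) :
  (forall n b, map (@f n) (sigma n b) = tau n (f _ b)) ->
  forall n k (w : seq (B (k + n))),
    map (@f n) (tau_range sigma w) = tau_range tau (map (@f (k + n)) w).
Proof.
move=> hf n; elim=> [|k IH] w //=; rewrite IH /subst map_flatten -!map_comp.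
by congr (tau_range _ (flatten _)); apply: eq_map => b /=; apply: hf.
Qed.

Section Restriction.
Variables (A : nat -> finType) (tau : forall n, A n.+1 -> seq (A n)).

Definition restrict n (a : Atil tau n.+1) : seq (Atil tau n) :=
  pmap insub (tau (val a)).

Hypothesis ne : nonerasing tau.

Lemma map_val_restrict n (a : Atil tau n.+1) : map val (restrict a) = tau (val a).
Proof.
rewrite /restrict (pmap_filter (@insubK _ _ _)); apply/all_filterP/allP => b hb.
have hL : inL tau b := inL_tau ne (asboolW (valP a)) hb.
by case: insubP => //; rewrite asboolT.
Qed.

Lemma restrict_letter_onto : letter_onto restrict.
Proof.
move=> n b; have [a ha hba] := inL_preimage ne (asboolW (valP b)).
by exists (Sub a (asboolT ha)); rewrite -(mem_map val_inj) map_val_restrict.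
Qed.

Lemma inX_restrict_val n (y : int -> Atil tau n) :
  inX restrict y -> inX tau (fun i => val (y i)).
Proof.
move=> hy l; have [k [a [k0 hw]]] := hy l; exists k, (val a); split=> //.
rewrite window_map (_ : [:: val a] = map val [:: a]) //.
by rewrite -(tau_range_map map_val_restrict) infix_map_inj //; apply: val_inj.
Qed.

Hypotheses (eg : everywhere_growing tau) (pr : proper_dir tau).

Lemma inX_lift n (x : int -> A n) : inX tau x ->
  exists y : int -> Atil tau n, inX restrict y /\ forall i, val (y i) = x i.
Proof.
move=> hx; have xL i : inL tau (x i) by exists x; split=> //; exists i.
exists (fun i => Sub (x i) (asboolT (xL i))); split=> // l.
have [N [a [V [lt_nN ha hV hw]]]] := inX_covered ne eg pr l hx.
move: a ha hV; rewrite -(subnK (ltnW lt_nN)) => a ha hV.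
exists (N - n), (Sub a (asboolT ha)); split; first lia.
rewrite -(infix_map_inj _ _ val_inj) -window_map (tau_range_map map_val_restrict) /=.
by rewrite -(derives_fun hV (derives_tau_range _ _)).
Qed.
End Restriction.
Arguments restrict {A} tau n a.

Unset Implicit Arguments.

Theorem lemma4p6 (A : nat -> finType) (tau : forall n, A n.+1 -> seq (A n)) :
  nonerasing tau -> everywhere_growing tau -> proper_dir tau ->
  (exists tau' : forall n, Atil tau n.+1 -> seq (Atil tau n),
     (* tau' n is the restriction of tau n, so tau n maps ~A_{n+1} into ~A_n^+ *)
     (forall n (a : Atil tau n.+1), map val (tau' n a) = tau n (val a)) /\
     letter_onto tau' /\
     (forall n,
        (forall y : int -> Atil tau n, inX tau' y -> inX tau (fun i => val (y i))) /\
        (forall x : int -> A n, inX tau x ->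
           exists y : int -> Atil tau n, inX tau' y /\ forall i, val (y i) = x i)))
  /\ (letter_onto tau -> forall n (a : A n), inL tau a).
Proof.
move=> ne eg pr; split; last by move=> lo n; apply: letter_onto_inL.
exists (restrict tau); split; first exact: map_val_restrict.
split; first exact: restrict_letter_onto.
by move=> n; split; [apply: inX_restrict_val | apply: inX_lift].
Qed.
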